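(* Let $D$ be a consistent domain, $(M,s)$ a state, and $a$ an announcement action with ''$a$ announces $\varphi$'' in $D$. Assume $(M,s)$ is consistency preserving for $a$, $a$ is executable in $(M,s)$, $(M,s)\models\varphi$, and $\Phi^a_D(a,(M,s))=\{(M',s')\}$. Then: (1) $(M',s')\models\mathbf C_{F_D(a,M,s)}\varphi$; (2) $(M',s')\models\mathbf C_{P_D(a,M,s)}\big(\mathbf C_{F_D(a,M,s)}\varphi\vee\mathbf C_{F_D(a,M,s)}\neg\varphi\big)$; (3) for every $i\in O_D(a,M,s)$ and every belief formula $\psi$, $(M',s')\models\mathbf B_i\psi$ iff $(M,s)\models\mathbf B_i\psi$.
   Context: Fix a finite set of agents $\mathcal{AG}=\{1,\dots,n\}$, a set $\mathcal F$ of fluents and a set of actions. Belief formulae are built from propositional (fluent) formulae over $\mathcal F$ using $\mathbf B_i\varphi$, Boolean connectives, and $\mathbf E_\alpha\varphi,\mathbf C_\alpha\varphi$ ($\emptyset\ne\alpha\subseteq\mathcal{AG}$). A Kripke structure $M$ has worlds $M[S]$, interpretations $M[\pi](u)\subseteq\mathcal F$ and relations $M[i]\subseteq M[S]\times M[S]$; a state is $(M,s)$, $s\in M[S]$. Satisfaction: fluent formulae are evaluated in $M[\pi](s)$; $(M,s)\models\mathbf B_i\psi$ iff $(M,t)\models\psi$ for all $(s,t)\in M[i]$; Boolean connectives as usual; $\mathbf E_\alpha\psi$ iff $\mathbf B_i\psi$ for all $i\in\alpha$; $\mathbf C_\alpha\psi$ iff $\mathbf E^k_\alpha\psi$ for all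 $k\ge0$ ($\mathbf E^0_\alpha\psi=\psi$, $\mathbf E^{k+1}_\alpha\psi=\mathbf E_\alpha\mathbf E^k_\alpha\psi$). A domain $D$ contains for each action $a$ exactly one ''executable $a$ if $\chi$'' ($\chi$ a belief formula; $a$ executable in $(M,u)$ iff $(M,u)\models\chi$), for announcement actions a single statement ''$a$ announces $\varphi$'' ($\varphi$ a fluent formula), and observability statements ''$X$ observes $a$ if $\theta$'', ''$X$ aware\_of $a$ if $\theta$'' ($\theta$ fluent formulae). $F_D(a,M,s)$ is the set of agents $X$ with some ''$X$ observes $a$ if $\theta$'' in $D$ and $(M,s)\models\theta$; $P_D(a,M,s)$ likewise with ''aware\_of''; $O_D(a,M,s)$ the remaining agents. $D$ is consistent if in particular $F_D\cap P_D=\emptyset$ always. Transition $\Phi^a_D$: if $a$ is executable in $(M,s)$, $\Phi^a_D(a,(M,s))=\{(M',s')\}$ where: let $c$ be a bijection from $M[S]$ onto fresh worlds; $M''$ has worlds $c(u)$ for those $u$ with $(M,u)\models\chi$, with interpretation $M[\pi](u)$; for $i\in F_D(a,M,s)$, $(c(u),c(v))\in M''[i]$ iff both are worlds of $M''$, $(u,v)\in M[i]$ and $M[\pi](u)\models\varphi\Leftrightarrow M[\pi](v)\models\varphi$; for $i\in P_D(a,M,s)$, $(c(u),c(v))\in M''[i]$ iff both are worlds of $M''$ and $(u,v)\in M[i]$; $M''[i]=\emptyset$ for $i\in O_D(a,M,s)$. Then $M'[S]=M[S]\cup M''[S]$ with inherited interpretations, $M'[i]=M[i]\cup M''[i]$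 for $i\in F_D\cup P_D$, $M'[i]=M[i]\cup\{(c(u),v)\mid c(u)\in M''[S],(u,v)\in M[i]\}$ for $i\in O_D$, and $s'=c(s)$. $(M,s)$ is consistency preserving for $a$ (announcing $\varphi$) if $(M,u)\not\models\mathbf B_i\neg\varphi$ for every $u\in M[S]$ and $i\in F_D(a,M,s)\cup P_D(a,M,s)$. *)

From mathcomp Require Import all_boot.
Set Implicit Arguments.
Unset Strict Implicit.

Section Syntax.
Variables (Ag F : Type).

Inductive fform : Type :=
| FTrue : fform
| FAtom : F -> fform
| FNot : fform -> fform
| FAnd : fform -> fform -> fform
| FOr : fform -> fform -> fform.

Inductive bform : Type :=
| BFl : fform -> bform
| BB : Ag -> bform -> bform
| BNot : bform -> bform
| BAnd : bform -> bform -> bform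
| BOr : bform -> bform -> bform
| BE : (Ag -> Prop) -> bform -> bform
| BC : (Ag -> Prop) -> bform -> bform.

Fixpoint wf (p : bform) : Prop :=
  match p with
  | BFl _ => True
  | BB _ q | BNot q => wf q
  | BAnd q r | BOr q r => wf q /\ wf r
  | BE al q | BC al q => (exists i, al i) /\ wf q
  end.
End Syntax.

Fixpoint fsat (F : Type) (I : F -> Prop) (p : fform F) : Prop :=
  match p with
  | FTrue => True
  | FAtom f => I f
  | FNot q => ~ fsat I q
  | FAnd q r => fsat I q /\ fsat I r
  | FOr q r => fsat I q \/ fsat I r
  end.

(* Kripke structure with world set W (M[S] = all of W) *)
Record kripke (Ag F W : Type) := Kripke {
  kval : W -> F -> Prop;
  krel : Ag -> W -> W -> Prop
}.

Fixpoint Eiter (Ag F W : Type) (M : kripke Ag F W) (al : Ag -> Prop)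
    (P : W -> Prop) (k : nat) : W -> Prop :=
  match k with
  | 0 => P
  | k'.+1 => fun u => forall i, al i -> forall v, krel M i u v -> Eiter M al P k' v
  end.

Fixpoint sat (Ag F W : Type) (M : kripke Ag F W) (p : bform Ag F) : W -> Prop :=
  match p with
  | BFl q => fun u => fsat (kval M u) q
  | BB i q => fun u => forall v, krel M i u v -> sat M q v
  | BNot q => fun u => ~ sat M q u
  | BAnd q r => fun u => sat M q u /\ sat M r u
  | BOr q r => fun u => sat M q u \/ sat M r u
  | BE al q => fun u => forall i, al i -> forall v, krel M i u v -> sat M q v
  | BC al q => fun u => forall k, Eiter M al (sat M q) k u
  end.

(* A domain: one executability condition per action, at most one
   "a announces phi" statement per action, and the sets of observability
   statements "X observes a if theta" / "X aware_of a if theta". *)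
Record domain (Ag F Act : Type) := Domain {
  exec : Act -> bform Ag F;
  announces : Act -> option (fform F);
  observes : Ag -> Act -> fform F -> Prop;
  aware_of : Ag -> Act -> fform F -> Prop
}.

Section Domain.
Variables (Ag F Act : Type) (D : domain Ag F Act).

(* F_D(a,M,s), P_D(a,M,s), O_D(a,M,s), given I = M[pi](s) *)
Definition FD (a : Act) (I : F -> Prop) (X : Ag) : Prop :=
  exists th, observes D X a th /\ fsat I th.
Definition PD (a : Act) (I : F -> Prop) (X : Ag) : Prop :=
  exists th, aware_of D X a th /\ fsat I th.
Definition OD (a : Act) (I : F -> Prop) (X : Ag) : Prop :=
  ~ FD a I X /\ ~ PD a I X.

(* consistency of D (the part stated in the paper: F_D ∩ P_D = ∅ always) *)
Definition consistent_domain : Prop :=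
  forall a I X, ~ (FD a I X /\ PD a I X).

Variables (W : Type) (M : kripke Ag F W).

Definition executable (a : Act) (s : W) : Prop := sat M (exec D a) s.

(* worlds of M': old worlds (inl) and fresh copies c(u) (inr) of the
   worlds u with (M,u) |= chi *)
Definition tworld (a : Act) : Type := (W + {u : W | sat M (exec D a) u})%type.

Definition tval (a : Act) (x : tworld a) : F -> Prop :=
  match x with
  | inl u => kval M u
  | inr u => kval M (proj1_sig u)
  end.

Definition trel (a : Act) (phi : fform F) (s : W) (i : Ag)
    (x y : tworld a) : Prop :=
  let I := kval M s in
  match x, y with
  | inl u, inl v => krel M i u v
  | inr u, inr v =>
      (FD a I i /\ krel M i (proj1_sig u) (proj1_sig v) /\
         (fsat (kval M (proj1_sig u)) phi <-> fsat (kval M (proj1_sig v)) phi))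
      \/ (PD a I i /\ krel M i (proj1_sig u) (proj1_sig v))
  | inr u, inl v => OD a I i /\ krel M i (proj1_sig u) v
  | inl _, inr _ => False
  end.

Definition tmodel (a : Act) (phi : fform F) (s : W) : kripke Ag F (tworld a) :=
  Kripke (@tval a) (trel phi s).

Definition tstate (a : Act) (s : W) (Hs : executable a s) : tworld a :=
  inr (exist _ s Hs).

Definition consistency_preserving (a : Act) (phi : fform F) (s : W) : Prop :=
  forall u i, (FD a (kval M s) i \/ PD a (kval M s) i) ->
    ~ sat M (BB i (BNot (BFl Ag phi))) u.
End Domain.

From mathcomp Require Import all_boot.
From Stdlib Require Import Classical.

Set Implicit Arguments.
Unset Strict Implicit.

(* The old worlds of M' form a copy of M that the new worlds never feed back
   into, so they satisfy exactly what they satisfied in M; an oblivious agent's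
   view from s' consists of old worlds only, which gives (3).  From a new world,
   observant and aware agents only reach new worlds, and an observant agent
   (who by consistency of D is not merely aware) only reaches copies agreeing
   on phi.  Hence phi, and likewise not phi, is invariant along F-edges between
   copies, which gives (1) and, since P-edges from copies stay among copies, (2). *)

Lemma Eiter_invariant (Ag F W : Type) (M : kripke Ag F W) (al : Ag -> Prop)
    (P Q : W -> Prop) :
  (forall u, Q u -> P u) ->
  (forall i u v, al i -> krel M i u v -> Q u -> Q v) ->
  forall k u, Q u -> Eiter M al P k u.
Proof.
move=> QP Qclosed; elim=> [|k IHk] u Qu /=; first exact: QP.
move=> i ali v uv; exact: IHk (Qclosed _ _ _ ali uv Qu).
Qed.

Lemma sat_BC_invariant (Ag F W : Type) (M : kripke Ag F W) (al : Ag -> Prop)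
    (q : bform Ag F) (Q : W -> Prop) :
  (forall u, Q u -> sat M q u) ->
  (forall i u v, al i -> krel M i u v -> Q u -> Q v) ->
  forall u, Q u -> sat M (BC al q) u.
Proof. by move=> Qq Qclosed u Qu k; apply: Eiter_invariant Qu. Qed.

Section Announcement.
Variables (Ag F Act W : Type) (D : domain Ag F Act) (M : kripke Ag F W).
Variables (s : W) (a : Act) (phi : fform F).

Local Notation M' := (tmodel D M a phi s).
Local Notation Fs := (FD D a (kval M s)).
Local Notation Ps := (PD D a (kval M s)).
Local Notation Os := (OD D a (kval M s)).
Local Notation copy := {u : W | sat M (exec D a) u}.
Local Notation phi_at u := (fsat (kval M u) phi).

Lemma Eiter_inl (al : Ag -> Prop) (q : bform Ag F) :
  (forall v, sat M' q (inl v) <-> sat M q v) ->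
  forall k v, Eiter M' al (sat M' q) k (inl v) <-> Eiter M al (sat M q) k v.
Proof.
move=> Hq; elim=> [|k IHk] v //=; split=> H i ali.
- by move=> w vw; apply/IHk; exact: (H i ali (inl w)).
- by case=> [w|w] //= vw; apply IHk; exact: H i ali w vw.
Qed.

Lemma sat_inl (psi : bform Ag F) v : sat M' psi (inl v) <-> sat M psi v.
Proof.
elim: psi v => [q|i q IH|q IH|q IHq r IHr|q IHq r IHr|al q IH|al q IH] v /=.
- by [].
- split=> H; first by move=> w vw; apply/IH; exact: (H (inl w)).
  by case=> [w|w] //= vw; apply IH; exact: H.
- by have := IH v; tauto.
- by have := IHq v; have := IHr v; tauto.
- by have := IHq v; have := IHr v; tauto.
- split=> H i ali; first by move=> w vw; apply/IH; exact: (H i ali (inl w)).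
  by case=> [w|w] //= vw; apply IH; exact: H i ali w vw.
- by split=> H k; apply (Eiter_inl al IH); exact: H.
Qed.

Lemma krel_copy_oblivious i (u : copy) y :
  Os i -> krel M' i (inr u) y <-> exists2 v, y = inl v & krel M i (sval u) v.
Proof.
move=> [notF notP]; case: y => [v|v] /=.
- by split=> [[_ uv]|[_ [<-] uv]]; [exists v | split].
- by split=> [[[] | []] //|[]].
Qed.

Lemma krel_copy_observant i (u : copy) y :
  ~ Os i -> krel M' i (inr u) y -> exists v, y = inr v.
Proof. by case: y => [v|v] /=; [move=> notO [] | exists v]. Qed.

Lemma krel_copy_full (HD : consistent_domain D) i (u v : copy) :
  Fs i -> krel M' i (inr u) (inr v) -> (phi_at (sval u) <-> phi_at (sval v)).
Proof. by move=> Fi [[_ [_ eq_phi]] // | [Pi _]]; case: (HD a (kval M s) i). Qed.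

Lemma full_not_oblivious i : Fs i -> ~ Os i.
Proof. by move=> Fi []. Qed.

Lemma partial_not_oblivious i : Ps i -> ~ Os i.
Proof. by move=> Pi []. Qed.

Lemma sat_copy_C_phi_invariant (HD : consistent_domain D) (q : fform F) :
  (forall u v, (phi_at u <-> phi_at v) -> fsat (kval M u) q -> fsat (kval M v) q) ->
  forall u : copy, fsat (kval M (sval u)) q -> sat M' (BC Fs (BFl Ag q)) (inr u).
Proof.
move=> q_phi u qu.
pose Q (x : tworld D M a) := exists2 w : copy, x = inr w & fsat (kval M (sval w)) q.
apply: (sat_BC_invariant (Q := Q)); last by exists u.
  by move=> _ [w -> qw].
move=> i x y Fi xy [w ? qw]; subst x.
have [v ?] := krel_copy_observant (full_not_oblivious Fi) xy; subst y.
by exists v => //; apply: q_phi qw; exact: krel_copy_full xy.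
Qed.

Lemma sat_copy_C_phi (HD : consistent_domain D) (u : copy) :
  phi_at (sval u) -> sat M' (BC Fs (BFl Ag phi)) (inr u).
Proof. by apply: (sat_copy_C_phi_invariant HD) => x y eq_phi; apply eq_phi. Qed.

Lemma sat_copy_C_not_phi (HD : consistent_domain D) (u : copy) :
  ~ phi_at (sval u) -> sat M' (BC Fs (BFl Ag (FNot phi))) (inr u).
Proof. by apply: (sat_copy_C_phi_invariant HD (q := FNot phi)) => x y eq_phi /= nx /eq_phi. Qed.

Lemma sat_copy_C_phi_or_not (HD : consistent_domain D) (u : copy) :
  sat M' (BOr (BC Fs (BFl Ag phi)) (BC Fs (BFl Ag (FNot phi)))) (inr u).
Proof.
have [phi_u | nphi_u] := classic (phi_at (sval u)).
- by left; exact: sat_copy_C_phi.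
- by right; exact: sat_copy_C_not_phi.
Qed.

Lemma sat_BB_copy_oblivious i (u : copy) (psi : bform Ag F) :
  Os i -> sat M' (BB i psi) (inr u) <-> sat M (BB i psi) (sval u).
Proof.
move=> Oi; split=> H v.
- by move=> uv; apply/sat_inl; apply: H; apply/krel_copy_oblivious => //; exists v.
- by move/(krel_copy_oblivious u v Oi) => [w -> uw]; apply/sat_inl; exact: H.
Qed.

Lemma sat_copy_C_partial (HD : consistent_domain D) (u : copy) :
  sat M' (BC Ps (BOr (BC Fs (BFl Ag phi)) (BC Fs (BFl Ag (FNot phi))))) (inr u).
Proof.
apply: (sat_BC_invariant (Q := fun x => exists w : copy, x = inr w)); last by exists u.
  by move=> _ [w ->]; exact: sat_copy_C_phi_or_not.
move=> i x y Pi xy [w ?]; subst x.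
exact: krel_copy_observant (partial_not_oblivious Pi) xy.
Qed.

End Announcement.

Theorem proposition4 (Ag : finType) (F Act W : Type)
    (D : domain Ag F Act) (M : kripke Ag F W) (s : W) (a : Act)
    (phi : fform F)
    (HD : consistent_domain D)
    (Hann : announces D a = Some phi)
    (Hcp : consistency_preserving D M a phi s)
    (Hex : executable D M a s)
    (Hphi : sat M (BFl Ag phi) s) :
  let M' := tmodel D M a phi s in
  let s' := tstate Hex in
  let Fs := FD D a (kval M s) in
  let Ps := PD D a (kval M s) in
  sat M' (BC Fs (BFl Ag phi)) s'
  /\ sat M' (BC Ps (BOr (BC Fs (BFl Ag phi)) (BC Fs (BFl Ag (FNot phi))))) s'
  /\ (forall i (psi : bform Ag F), OD D a (kval M s) i -> wf psi ->
        (sat M' (BB i psi) s' <-> sat M (BB i psi) s)).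
Proof.
move=> M' s' Fs Ps; split; [|split].
- exact: (sat_copy_C_phi s HD (u := exist _ s Hex) Hphi).
- exact: (sat_copy_C_partial s phi HD (exist _ s Hex)).
- by move=> i psi Oi _; exact: sat_BB_copy_oblivious.
Qed.
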